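(* Let $p$ be a prime, $k$ a positive integer with $p\nmid k$, and $\chi_k$ a Dirichlet character modulo $k$. Define $\mathfrak{x}_k(p^n)=\left(\chi_k(p)\right)^n$ for all $n\in\mathbb{Z}$. For $s\in\mathbb{C}$ with $\mathrm{Re}(s)>0$, the twisted Gelfand–Graev–Tate gamma function \[ \Gamma_{\mathfrak{x}}(s)=\int_{\mathbb{Q}_p} e^{2\pi i\xi}\,|\xi|_p^{s-1}\,\mathfrak{x}_k\!\left(|\xi|_p^{-1}\right)d\xi \] is given by \[ \Gamma_{\mathfrak{x}}(s)=\frac{\chi_k(p)-p^{s-1}}{\chi_k(p)\left(1-\chi_k(p)\,p^{-s}\right)}. \]
   Context: $\mathbb{Q}_p$ is the field of $p$-adic numbers with norm $|\cdot|_p$, and $d\xi$ is the additive Haar measure on $\mathbb{Q}_p$ normalized so that $\mathbb{Z}_p=\{|\xi|_p\le1\}$ has measure $1$. For $\xi\in\mathbb{Q}_p$, $e^{2\pi i\xi}$ denotes $\exp(2\pi i\{\xi\}_p)$, where $\{\xi\}_p\in\mathbb{Q}$ is the fractional part of $\xi$ in its $p$-adic expansion (the standard additive character of $\mathbb{Q}_p$). Since $p\nmid k$, $\chi_k(p)$ is a root of unity, so $\mathfrak{x}_k(p^n)$ is defined for negative $n$ as well. The integral is understood as the sum over the shells $\{|\xi|_p=p^n\}$, $n\in\mathbb{Z}$. *)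

From Stdlib Require Import Reals ZArith Znumtheory Lra Lia.
From Coquelicot Require Import Coquelicot.

Open Scope R_scope.

Definition is_dirichlet_character (k : Z) (chi : Z -> C) : Prop :=
  (forall m n : Z, chi (m * n)%Z = Cmult (chi m) (chi n)) /\
  (forall n : Z, chi (n + k)%Z = chi n) /\
  chi 1%Z = RtoC 1 /\
  (forall n : Z, Z.gcd n k <> 1%Z -> chi n = RtoC 0).

Fixpoint Cpow_nat (c : C) (n : nat) : C :=
  match n with O => RtoC 1 | S m => Cmult c (Cpow_nat c m) end.
Definition Cpow_Z (c : C) (n : Z) : C :=
  match n with
  | Z0 => RtoC 1
  | Zpos q => Cpow_nat c (Pos.to_nat q)
  | Zneg q => Cinv (Cpow_nat c (Pos.to_nat q))
  end.

(** Complex power x^z := exp(z ln x) of a positive real x. *)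
Definition Cpow_pos (x : R) (z : C) : C :=
  Cmult (RtoC (exp (Re z * ln x)))
        (cos (Im z * ln x), sin (Im z * ln x)).

Definition e2pii (t : R) : C := (cos (2 * PI * t), sin (2 * PI * t)).

(** p-adic valuation of an integer (0 for a = 0, unused there). *)
Fixpoint vp_aux (fuel : nat) (p a : Z) : Z :=
  match fuel with
  | O => 0%Z
  | S f => if andb (Z.eqb (Z.modulo a p) 0) (negb (Z.eqb a 0))
           then (1 + vp_aux f p (Z.div a p))%Z else 0%Z
  end.
Definition vp (p a : Z) : Z := vp_aux (Z.to_nat (Z.abs a)) p a.

(** Points of Z[1/p] (dense in Q_p) are represented as pairs (a, n)
    standing for xi = a * p^(-n). *)

Definition padic_abs (p a n : Z) : R :=
  if Z.eqb a 0 then 0 else powerRZ (IZR p) (n - vp p a).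

Definition padic_frac (p a n : Z) : R :=
  if Z.leb n 0 then 0 else IZR (Z.modulo a (p ^ n)) / IZR (p ^ n).

Fixpoint Csum (g : nat -> C) (N : nat) : C :=
  match N with O => RtoC 0 | S M => Cplus (Csum g M) (g M) end.

(** Riemann sum for the Haar integral (Z_p of measure 1) over the shell
    {|xi|_p = p^n}: the shell is partitioned into the cosets
    a p^{-n} + p^{m-n} Z_p (0 <= a < p^m, p not dividing a), each of
    measure p^{n-m}. *)
Definition shell_riemann (p : Z) (f : Z -> Z -> C) (n : Z) (m : nat) : C :=
  Cmult (RtoC (powerRZ (IZR p) (n - Z.of_nat m)))
    (Csum (fun a => if Z.eqb (Z.modulo (Z.of_nat a) p) 0 then RtoC 0
                    else f (Z.of_nat a) n)
          (Z.to_nat (p ^ Z.of_nat m))).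

Definition is_shell_integral (p : Z) (f : Z -> Z -> C) (n : Z) (v : C) : Prop :=
  filterlim (shell_riemann p f n) eventually (locally v).

(** L is the integral of f over Q_p, understood as the (convergent)
    sum over all shells n in Z of the shell integrals. *)
Definition is_Qp_integral (p : Z) (f : Z -> Z -> C) (L : C) : Prop :=
  exists v : Z -> C,
    (forall n : Z, is_shell_integral p f n (v n)) /\
    exists l1 l2 : C,
      is_series (fun j : nat => v (- Z.of_nat j)%Z) l1 /\
      is_series (fun j : nat => v (Z.of_nat j + 1)%Z) l2 /\
      L = Cplus l1 l2.

Definition frak_x (chi : Z -> C) (p n : Z) : C := Cpow_Z (chi p) n.

(** Integrand e^{2 pi i xi} |xi|_p^{s-1} x_k(|xi|_p^{-1}) at xi = a p^{-n};
    |xi|_p^{-1} = p^(vp a - n). *)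
Definition gg_integrand (p : Z) (chi : Z -> C) (s : C) (a n : Z) : C :=
  Cmult (Cmult (e2pii (padic_frac p a n))
               (Cpow_pos (padic_abs p a n) (Cminus s (RtoC 1))))
        (frak_x chi p (vp p a - n)%Z).

From Stdlib Require Import Reals ZArith Znumtheory Lra Lia.
From Coquelicot Require Import Coquelicot.

Open Scope R_scope.

(* On the shell [|xi|_p = p^n] the factor [|xi|_p^(s-1) x_k(|xi|_p^(-1))] is
   constant, and the Riemann sums of [e^(2 pi i xi)] over the shell, taken over
   the units modulo [p^m], are Ramanujan sums: once [m > n] the shell integral of
   the character is [p^n (1 - 1/p)] for [n <= 0], [-1] for [n = 1] and [0] for
   [n >= 2].  The shells [n <= 0] thus form a geometric series of ratio
   [chi(p) p^(-s)], which converges because [|chi(p)| <= 1] and [Re s > 0]. *)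

Lemma Cpow_nat_Cpow (c : C) (n : nat) : Cpow_nat c n = (c ^ n)%C.
Proof. induction n as [|n IH]; simpl; [reflexivity | now rewrite IH]. Qed.

Lemma Cpow_Z_of_nat (c : C) (n : nat) : Cpow_Z c (Z.of_nat n) = (c ^ n)%C.
Proof.
  destruct n as [|n]; [reflexivity|].
  simpl Z.of_nat; unfold Cpow_Z. rewrite SuccNat2Pos.id_succ. apply Cpow_nat_Cpow.
Qed.

Lemma Cpow_Z_m1 (c : C) : Cpow_Z c (-1) = (/ c)%C.
Proof. change (Cpow_Z c (-1)) with (/ (c * 1))%C. now rewrite Cmult_1_r. Qed.

Lemma Cpow_pos_add (x : R) (z w : C) :
  Cpow_pos x (z + w)%C = (Cpow_pos x z * Cpow_pos x w)%C.
Proof.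
  unfold Cpow_pos, Re, Im; simpl.
  rewrite !Rmult_plus_distr_r, exp_plus, cos_plus, sin_plus.
  apply injective_projections; simpl; ring.
Qed.

Lemma Cmod_Cpow_pos (x : R) (z : C) : Cmod (Cpow_pos x z) = exp (Re z * ln x).
Proof.
  unfold Cpow_pos. rewrite Cmod_mult, Cmod_R, Rabs_pos_eq by apply Rlt_le, exp_pos.
  unfold Cmod; simpl. rewrite !Rmult_1_r, Rplus_comm.
  change (sin (Im z * ln x) * sin (Im z * ln x)) with (Rsqr (sin (Im z * ln x))).
  change (cos (Im z * ln x) * cos (Im z * ln x)) with (Rsqr (cos (Im z * ln x))).
  rewrite sin2_cos2, sqrt_1. ring.
Qed.

Lemma Cpow_pos_RtoC (x r : R) : Cpow_pos x (RtoC r) = RtoC (exp (r * ln x)).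
Proof.
  unfold Cpow_pos; simpl. rewrite Rmult_0_l, cos_0, sin_0.
  apply injective_projections; simpl; ring.
Qed.

Lemma Cpow_pos_1 (x : R) : 0 < x -> Cpow_pos x 1%C = RtoC x.
Proof. intros Hx. rewrite Cpow_pos_RtoC, Rmult_1_l, exp_ln by exact Hx. reflexivity. Qed.

Lemma Cpow_pos_opp_1 (x : R) : 0 < x -> Cpow_pos x (RtoC (- 1)) = RtoC (/ x).
Proof.
  intros Hx. rewrite Cpow_pos_RtoC. replace (-1 * ln x) with (- ln x) by ring.
  rewrite exp_Ropp, exp_ln by exact Hx. reflexivity.
Qed.

Lemma Cmod_Cpow_pos_opp_lt_1 (x : R) (z : C) : 1 < x -> 0 < Re z ->
  Cmod (Cpow_pos x (- z)%C) < 1.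
Proof.
  intros Hx Hz. rewrite Cmod_Cpow_pos, <- exp_0. apply exp_increasing.
  assert (0 < ln x) by (rewrite <- ln_1; apply ln_increasing; lra).
  unfold Re in *; simpl. nra.
Qed.

Lemma ln_powerRZ (x : R) (n : Z) : 0 < x -> ln (powerRZ x n) = IZR n * ln x.
Proof.
  intros Hx. destruct n as [|n|n]; simpl.
  - rewrite ln_1. ring.
  - rewrite ln_pow, INR_IZR_INZ, positive_nat_Z by exact Hx. reflexivity.
  - rewrite ln_Rinv, ln_pow, INR_IZR_INZ, positive_nat_Z by (auto using pow_lt).
    rewrite <- Pos2Z.opp_pos, opp_IZR. ring.
Qed.

Lemma powerRZ_sub_nat (x : R) (n : Z) (m : nat) : x <> 0 ->
  powerRZ x (n - Z.of_nat m) = powerRZ x n / x ^ m.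
Proof.
  intros Hx. unfold Z.sub. rewrite powerRZ_add, powerRZ_neg', <- pow_powerRZ by exact Hx.
  reflexivity.
Qed.

Lemma Cpow_pos_powerRZ (x : R) (n : Z) (z : C) : 0 < x ->
  Cpow_pos (powerRZ x n) z = Cpow_pos x (IZR n * z)%C.
Proof.
  intros Hx. unfold Cpow_pos, Re, Im. rewrite ln_powerRZ by exact Hx.
  simpl.
  replace ((IZR n * fst z - 0 * snd z) * ln x) with (fst z * (IZR n * ln x)) by ring.
  replace ((IZR n * snd z + 0 * fst z) * ln x) with (snd z * (IZR n * ln x)) by ring.
  reflexivity.
Qed.

Lemma Cpow_pos_mult_INR (x : R) (n : nat) (z : C) :
  Cpow_pos x (INR n * z)%C = (Cpow_pos x z ^ n)%C.
Proof.
  induction n as [|n IH].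
  - change (Cpow_pos x (0 * z)%C = 1).
    rewrite Cmult_0_l, Cpow_pos_RtoC, Rmult_0_l, exp_0. reflexivity.
  - rewrite Cpow_S, <- IH, <- Cpow_pos_add. f_equal.
    rewrite S_INR, RtoC_plus. ring.
Qed.

Lemma Cminus_1_neq_0 (w : C) : Cmod w < 1 -> (1 - w)%C <> 0%C.
Proof.
  intros Hw E. replace w with (1 - (1 - w))%C in Hw by ring.
  rewrite E in Hw. replace (1 - 0)%C with (RtoC 1) in Hw by ring. rewrite Cmod_1 in Hw. lra.
Qed.

Lemma sum_n_Cgeom (w : C) (N : nat) :
  ((1 - w) * sum_n (fun j => w ^ j) N)%C = (1 - w ^ S N)%C.
Proof.
  induction N as [|N IH].
  - rewrite sum_O. simpl. ring.
  - rewrite sum_Sn. change (plus ?a ?b) with (Cplus a b).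
    rewrite Cmult_plus_distr_l, IH, (Cpow_S w (S N)). ring.
Qed.

Lemma is_series_Cgeom (w : C) : Cmod w < 1 -> is_series (fun j => (w ^ j)%C) (/ (1 - w))%C.
Proof.
  intros Hw. pose proof (Cminus_1_neq_0 w Hw) as Hne.
  pose proof (proj1 (Cmod_gt_0 _) Hne) as Hpos.
  assert (Hpartial : forall N, (sum_n (fun j => w ^ j) N - / (1 - w))%C
                               = (- (w ^ S N * / (1 - w)))%C).
  { intros N.
    transitivity (/ (1 - w) * ((1 - w) * sum_n (fun j => w ^ j) N - 1))%C.
    - field. exact Hne.
    - rewrite sum_n_Cgeom. field. exact Hne. }
  apply filterlim_locally_ball_norm. intros eps.
  destruct (pow_lt_1_zero (Cmod w)) with (y := eps * Cmod (1 - w)) as [N HN].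
  { rewrite Rabs_pos_eq by apply Cmod_ge_0. exact Hw. }
  { apply Rmult_lt_0_compat; [apply cond_pos | exact Hpos]. }
  exists N. intros n Hn. unfold ball_norm.
  change (Cmod (sum_n (fun j => w ^ j) n - / (1 - w))%C < eps).
  rewrite Hpartial, Cmod_opp, Cmod_mult, Cmod_inv, Cmod_pow by exact Hne.
  specialize (HN (S n) ltac:(lia)).
  rewrite Rabs_pos_eq in HN by (apply pow_le, Cmod_ge_0).
  apply (Rmult_lt_reg_r (Cmod (1 - w))); [exact Hpos|].
  rewrite Rmult_assoc, Rinv_l by lra. lra.
Qed.

Lemma is_series_first {K : AbsRing} {V : NormedModule K} (a : nat -> V) :
  (forall j, (0 < j)%nat -> a j = zero) -> is_series a (a O).
Proof.
  intros Ha. apply (filterlim_ext (fun _ => a O)); [|apply filterlim_const].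
  intros N. induction N as [|N IH]; [now rewrite sum_O|].
  rewrite sum_Sn, <- IH, (Ha (S N)), plus_zero_r by lia. reflexivity.
Qed.

Lemma filterlim_eventually_const {T : UniformSpace} (u : nat -> T) (l : T) (N : nat) :
  (forall n, (N <= n)%nat -> u n = l) -> filterlim u eventually (locally l).
Proof.
  intros Hu. apply (filterlim_ext_loc (fun _ => l)); [|apply filterlim_const].
  exists N. intros n Hn. symmetry. exact (Hu n Hn).
Qed.

Lemma e2pii_add (x y : R) : e2pii (x + y) = (e2pii x * e2pii y)%C.
Proof.
  unfold e2pii. rewrite Rmult_plus_distr_l, cos_plus, sin_plus.
  apply injective_projections; simpl; ring.
Qed.

Lemma e2pii_0 : e2pii 0 = 1%C.
Proof. unfold e2pii. rewrite Rmult_0_r, cos_0, sin_0. reflexivity. Qed.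

Lemma e2pii_mult_INR (n : nat) (x : R) : e2pii (INR n * x) = (e2pii x ^ n)%C.
Proof.
  induction n as [|n IH].
  - rewrite Rmult_0_l. apply e2pii_0.
  - rewrite S_INR, Rmult_plus_distr_r, Rmult_1_l, Rplus_comm, e2pii_add, IH.
    reflexivity.
Qed.

Lemma e2pii_INR (n : nat) : e2pii (INR n) = 1%C.
Proof.
  rewrite <- (Rmult_1_r (INR n)), e2pii_mult_INR.
  unfold e2pii. rewrite Rmult_1_r, cos_2PI, sin_2PI. apply Cpow_1_l.
Qed.

Lemma e2pii_IZR (z : Z) : e2pii (IZR z) = 1%C.
Proof.
  destruct (Z_le_gt_dec 0 z) as [Hz | Hz].
  - rewrite <- (Z2Nat.id z), <- INR_IZR_INZ by exact Hz. apply e2pii_INR.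
  - transitivity (e2pii (IZR z) * e2pii (INR (Z.to_nat (- z))))%C.
    { rewrite e2pii_INR. ring. }
    rewrite <- e2pii_add, INR_IZR_INZ, Z2Nat.id, <- plus_IZR by lia.
    replace (z + - z)%Z with 0%Z by ring. apply e2pii_0.
Qed.

Lemma e2pii_mod (a q : Z) : (0 < q)%Z ->
  e2pii (IZR (a mod q) / IZR q) = e2pii (IZR a / IZR q).
Proof.
  intros Hq. rewrite (Z_div_mod_eq_full a q) at 2.
  assert (IZR q <> 0) by (apply not_0_IZR; lia).
  replace (IZR (q * (a / q) + a mod q) / IZR q)
    with (IZR (a / q) + IZR (a mod q) / IZR q)
    by (rewrite plus_IZR, mult_IZR; field; assumption).
  rewrite e2pii_add, e2pii_IZR, Cmult_1_l. reflexivity.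
Qed.

Lemma e2pii_inv_neq_1 (q : R) : 2 <= q -> e2pii (/ q) <> 1%C.
Proof.
  intros Hq Heq. injection Heq as Hcos _.
  pose proof PI_RGT_0.
  assert (Hx : 0 < 2 * PI * / q <= PI).
  { split.
    - apply Rmult_lt_0_compat; [lra | apply Rinv_0_lt_compat; lra].
    - apply (Rmult_le_reg_r q); [lra|].
      rewrite Rmult_assoc, Rinv_l by lra. nra. }
  pose proof (cos_decreasing_1 0 (2 * PI * / q)) as Hdec. rewrite cos_0 in Hdec.
  assert (cos (2 * PI * / q) < 1) by (apply Hdec; lra). lra.
Qed.

Lemma Csum_ext (f g : nat -> C) (N : nat) :
  (forall a, (a < N)%nat -> f a = g a) -> Csum f N = Csum g N.
Proof.
  induction N as [|N IH]; intros Hfg; simpl; [reflexivity|].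
  rewrite IH by (intros; apply Hfg; lia). rewrite Hfg by lia. reflexivity.
Qed.

Lemma Csum_scal (c : C) (f : nat -> C) (N : nat) :
  Csum (fun a => c * f a)%C N = (c * Csum f N)%C.
Proof. induction N as [|N IH]; simpl; [|rewrite IH]; ring. Qed.

Lemma Csum_const (c : C) (N : nat) : Csum (fun _ => c) N = (INR N * c)%C.
Proof. induction N as [|N IH]; simpl Csum; [|rewrite IH, S_INR, RtoC_plus]; simpl; ring. Qed.

Lemma Csum_add (g : nat -> C) (N L : nat) :
  Csum g (N + L) = (Csum g N + Csum (fun i => g (N + i)%nat) L)%C.
Proof.
  induction L as [|L IH]; simpl Csum.
  - rewrite Nat.add_0_r. ring.
  - rewrite Nat.add_succ_r. simpl Csum. rewrite IH. ring.
Qed.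

Lemma Csum_succ_l (g : nat -> C) (N : nat) :
  Csum g (S N) = (g O + Csum (fun i => g (S i)) N)%C.
Proof. change (S N) with (1 + N)%nat. rewrite Csum_add. simpl Csum. ring. Qed.

Lemma Csum_geom (z : C) (N : nat) :
  ((z - 1) * Csum (fun a => z ^ a) N)%C = (z ^ N - 1)%C.
Proof.
  induction N as [|N IH]; simpl Csum; [simpl; ring|].
  rewrite Cmult_plus_distr_l, IH, Cpow_S. ring.
Qed.

Lemma Csum_e2pii_multiple (q L : nat) : (2 <= q)%nat ->
  Csum (fun a => e2pii (INR a / INR q)) (q * L) = 0%C.
Proof.
  intros Hq.
  assert (Hq' : 2 <= INR q) by (apply (le_INR 2); exact Hq).
  set (z := e2pii (/ INR q)).
  assert (Hz : (z - 1)%C <> 0%C).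
  { intros E. apply (e2pii_inv_neq_1 (INR q) Hq'). fold z.
    replace z with ((z - 1) + 1)%C by ring. rewrite E. ring. }
  assert (HzN : (z ^ (q * L))%C = 1%C).
  { unfold z. rewrite <- e2pii_mult_INR, mult_INR.
    replace (INR q * INR L * / INR q) with (INR L) by (field; lra).
    apply e2pii_INR. }
  rewrite (Csum_ext _ (fun a => z ^ a)%C)
    by (intros a _; unfold z; rewrite <- e2pii_mult_INR; reflexivity).
  transitivity (/ (z - 1) * ((z - 1) * Csum (fun a => z ^ a) (q * L)))%C.
  - field. exact Hz.
  - rewrite Csum_geom, HzN. ring.
Qed.

Lemma Csum_sieve (P M : nat) (h : nat -> C) : (0 < P)%nat ->
  Csum (fun a => if (a mod P =? 0)%nat then 0%C else h a) (P * M)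
  = (Csum h (P * M) - Csum (fun b => h (P * b)%nat) M)%C.
Proof.
  intros HP. induction M as [|M IH].
  - rewrite Nat.mul_0_r. simpl. ring.
  - rewrite Nat.mul_succ_r, !Csum_add, IH. simpl (Csum _ (S M)).
    destruct P as [|P]; [lia|]. rewrite !Csum_succ_l, Nat.add_0_r.
    replace ((S P * M) mod S P)%nat with 0%nat
      by (rewrite Nat.mul_comm; symmetry; apply Nat.Div0.mod_mul).
    rewrite Nat.eqb_refl.
    rewrite (Csum_ext _ (fun i => h (S P * M + S i)%nat) P).
    + ring.
    + intros i Hi. rewrite Nat.add_comm, Nat.mul_comm, Nat.Div0.mod_add, Nat.mod_small by lia.
      reflexivity.
Qed.

(* For [P] prime and [e <= m], this is [P ^ (m - e)] copies of the Ramanujan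
   sum [c_(P^e)(1)]. *)
Definition ramanujan_sum (P e m : nat) : C :=
  Csum (fun a => if (a mod P =? 0)%nat then 0%C else e2pii (INR a / INR (P ^ e)))
       (P ^ m).

Lemma pow_succ_ge_2 (P e : nat) : (2 <= P)%nat -> (2 <= P ^ S e)%nat.
Proof.
  intros HP. apply (Nat.le_trans _ (P ^ 1)); [rewrite Nat.pow_1_r; exact HP|].
  apply Nat.pow_le_mono_r; lia.
Qed.

Lemma pow_split (P e m : nat) : (e <= m)%nat -> (P ^ m = P ^ e * P ^ (m - e))%nat.
Proof. intros Hem. rewrite <- Nat.pow_add_r. f_equal. lia. Qed.

Lemma ramanujan_sum_0 (P m : nat) : (0 < P)%nat ->
  ramanujan_sum P 0 (S m) = RtoC (INR (P ^ S m) - INR (P ^ m)).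
Proof.
  intros HP. unfold ramanujan_sum.
  rewrite (Csum_ext _ (fun a => if (a mod P =? 0)%nat then 0%C else 1%C)).
  - rewrite Nat.pow_succ_r', Csum_sieve, !Csum_const, RtoC_minus by exact HP. ring.
  - intros a _. destruct (a mod P =? 0)%nat; [reflexivity|].
    change (INR (P ^ 0)) with 1. rewrite Rdiv_1_r. apply e2pii_INR.
Qed.

Lemma ramanujan_sum_1 (P m : nat) : (2 <= P)%nat ->
  ramanujan_sum P 1 (S m) = RtoC (- INR (P ^ m)).
Proof.
  intros HP. unfold ramanujan_sum.
  rewrite Nat.pow_1_r, Nat.pow_succ_r', Csum_sieve, Csum_e2pii_multiple by lia.
  rewrite (Csum_ext _ (fun _ => 1%C)), Csum_const, RtoC_opp; [ring|].
  intros b _. rewrite mult_INR.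
  replace (INR P * INR b / INR P) with (INR b)
    by (field; apply not_0_INR; lia).
  apply e2pii_INR.
Qed.

Lemma ramanujan_sum_high (P e m : nat) : (2 <= P)%nat -> (S e <= m)%nat ->
  ramanujan_sum P (S (S e)) (S m) = 0%C.
Proof.
  intros HP Hem. unfold ramanujan_sum.
  rewrite (Nat.pow_succ_r' P m), Csum_sieve by lia.
  replace (P * P ^ m)%nat with (P ^ S (S e) * P ^ (m - S e))%nat
    by (rewrite <- Nat.pow_succ_r', <- Nat.pow_add_r; f_equal; lia).
  rewrite Csum_e2pii_multiple by (apply pow_succ_ge_2; exact HP).
  rewrite (Csum_ext _ (fun b => e2pii (INR b / INR (P ^ S e)))).
  - rewrite (pow_split P (S e) m), Csum_e2pii_multiple
      by (exact Hem || apply pow_succ_ge_2; exact HP).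
    ring.
  - intros b _. f_equal.
    rewrite (Nat.pow_succ_r' P (S e)), !mult_INR.
    field. split; apply not_0_INR; [apply Nat.pow_nonzero|]; lia.
Qed.

Lemma finite_upper_bound (f : nat -> R) (N : nat) :
  exists M, forall r, (r < N)%nat -> f r <= M.
Proof.
  induction N as [|N [M HM]]; [exists 0; intros; lia|].
  exists (Rmax M (f N)). intros r Hr.
  destruct (Nat.eq_dec r N) as [->|Hne]; [apply Rmax_r|].
  apply (Rle_trans _ M); [apply HM; lia | apply Rmax_l].
Qed.

Section DirichletCharacter.

Variables (k : Z) (chi : Z -> C).
Hypothesis Hchi : is_dirichlet_character k chi.

Lemma dirichlet_periodic_nat (j : nat) (n : Z) : chi (n + Z.of_nat j * k)%Z = chi n.
Proof.
  destruct Hchi as [_ [Hper _]].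
  induction j as [|j IH]; [f_equal; lia|].
  rewrite Nat2Z.inj_succ, Z.mul_succ_l, Z.add_assoc, Hper. exact IH.
Qed.

Lemma dirichlet_periodic (j n : Z) : chi (n + j * k)%Z = chi n.
Proof.
  destruct (Z_le_gt_dec 0 j) as [Hj | Hj].
  - rewrite <- (Z2Nat.id j) by exact Hj. apply dirichlet_periodic_nat.
  - rewrite <- (dirichlet_periodic_nat (Z.to_nat (- j)) (n + j * k)).
    f_equal. rewrite Z2Nat.id by lia. ring.
Qed.

Lemma dirichlet_pow (n : Z) (j : nat) : chi (n ^ Z.of_nat j)%Z = (chi n ^ j)%C.
Proof.
  destruct Hchi as [Hmul [_ [H1 _]]].
  induction j as [|j IH]; [exact H1|].
  rewrite Nat2Z.inj_succ, Z.pow_succ_r, Hmul, IH by lia. reflexivity.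
Qed.

Lemma dirichlet_neq_0 (n : Z) : rel_prime n k -> chi n <> 0%C.
Proof.
  destruct Hchi as [Hmul [_ [H1 _]]].
  intros Hnk Hn. apply Zis_gcd_bezout in Hnk. destruct Hnk as [u v Huv].
  assert (Hnu : chi (n * u)%Z = 1%C).
  { replace (n * u)%Z with (1 + - v * k)%Z by lia.
    rewrite dirichlet_periodic. exact H1. }
  rewrite Hmul, Hn, Cmult_0_l in Hnu. injection Hnu. lra.
Qed.

Hypothesis Hk : (0 < k)%Z.

Lemma dirichlet_bounded : exists M, forall n, Cmod (chi n) <= M.
Proof.
  destruct (finite_upper_bound (fun r => Cmod (chi (Z.of_nat r))) (Z.to_nat k)) as [M HM].
  exists M. intros n.
  rewrite <- (dirichlet_periodic (- (n / k)) n).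
  pose proof (Z.mod_pos_bound n k Hk).
  replace (n + - (n / k) * k)%Z with (Z.of_nat (Z.to_nat (n mod k)))
    by (rewrite Z2Nat.id, Z.mod_eq; lia).
  apply HM. lia.
Qed.

(* The powers [chi n ^ j = chi (n ^ j)] stay bounded. *)
Lemma dirichlet_Cmod_le_1 (n : Z) : Cmod (chi n) <= 1.
Proof.
  destruct dirichlet_bounded as [M HM].
  destruct (Rle_lt_dec (Cmod (chi n)) 1) as [|Hgt]; [assumption|exfalso].
  destruct (Pow_x_infinity (Cmod (chi n))) with (b := M + 1) as [N HN].
  { rewrite Rabs_pos_eq by apply Cmod_ge_0. lra. }
  specialize (HN N (le_n N)).
  rewrite Rabs_pos_eq, <- Cmod_pow, <- dirichlet_pow in HN
    by (apply pow_le, Cmod_ge_0).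
  specialize (HM (n ^ Z.of_nat N)%Z). lra.
Qed.

End DirichletCharacter.

Section GelfandGraevTate.

Variables (p : Z) (chi : Z -> C) (s : C).
Hypothesis Hp : (1 < p)%Z.

(* The factor [|xi|_p^(s-1) x_k(|xi|_p^(-1))] of the integrand on the shell
   [|xi|_p = p^n]. *)
Definition gg_radial (n : Z) : C :=
  (Cpow_pos (powerRZ (IZR p) n) (s - 1) * frak_x chi p (- n))%C.

Definition gg_shell (n : Z) : C :=
  if (n <=? 0)%Z then (RtoC (powerRZ (IZR p) n * (1 - / IZR p)) * gg_radial n)%C
  else if (n =? 1)%Z then (- gg_radial 1)%C
  else 0%C.

Lemma IZR_p_gt_1 : 1 < IZR p.
Proof. apply IZR_lt. exact Hp. Qed.

Lemma INR_Z2N_pow (m : nat) : INR (Z.to_nat p ^ m) = IZR p ^ m.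
Proof. rewrite pow_INR, INR_IZR_INZ, Z2Nat.id by lia. reflexivity. Qed.

Lemma vp_unit (a : Z) : (a mod p <> 0)%Z -> vp p a = 0%Z.
Proof.
  intros Ha. unfold vp. destruct (Z.to_nat (Z.abs a)) eqn:E.
  - replace a with 0%Z in Ha by lia. now rewrite Zmod_0_l in Ha.
  - simpl. destruct (Z.eqb_spec (a mod p) 0); [contradiction | reflexivity].
Qed.

Lemma gg_integrand_unit (a n : Z) : (a mod p <> 0)%Z ->
  gg_integrand p chi s a n = (e2pii (padic_frac p a n) * gg_radial n)%C.
Proof.
  intros Ha. unfold gg_integrand, gg_radial, padic_abs.
  rewrite vp_unit by exact Ha.
  destruct (Z.eqb_spec a 0) as [->|_]; [now rewrite Zmod_0_l in Ha|].
  rewrite Z.sub_0_r, Z.sub_0_l. ring.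
Qed.

Lemma e2pii_padic_frac (a : nat) (n : Z) :
  e2pii (padic_frac p (Z.of_nat a) n) = e2pii (INR a / INR (Z.to_nat p ^ Z.to_nat n)).
Proof.
  unfold padic_frac. destruct (Z.leb_spec n 0).
  - replace (Z.to_nat n) with 0%nat by lia.
    change (INR (_ ^ 0)) with 1. rewrite Rdiv_1_r, e2pii_INR. apply e2pii_0.
  - rewrite e2pii_mod by (apply Z.pow_pos_nonneg; lia).
    rewrite !INR_IZR_INZ, Nat2Z.inj_pow, !Z2Nat.id by lia. reflexivity.
Qed.

Lemma shell_riemann_gg (n : Z) (m : nat) :
  shell_riemann p (gg_integrand p chi s) n m
  = (RtoC (powerRZ (IZR p) (n - Z.of_nat m))
     * ramanujan_sum (Z.to_nat p) (Z.to_nat n) m * gg_radial n)%C.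
Proof.
  unfold shell_riemann, ramanujan_sum.
  rewrite Z2Nat.inj_pow, Nat2Z.id by lia.
  rewrite <- Cmult_assoc, (Cmult_comm (Csum _ _)), <- (Csum_scal (gg_radial n)).
  f_equal. apply Csum_ext. intros a _.
  rewrite <- (Z2Nat.id p) at 1 by lia. rewrite <- Nat2Z.inj_mod.
  destruct (Nat.eqb_spec (a mod Z.to_nat p) 0) as [Ha|Ha].
  - rewrite Ha. simpl. ring.
  - rewrite (proj2 (Z.eqb_neq _ _)) by lia.
    rewrite gg_integrand_unit, e2pii_padic_frac; [ring|].
    rewrite <- (Z2Nat.id p), <- Nat2Z.inj_mod by lia. lia.
Qed.

Lemma shell_riemann_gg_eventually (n : Z) (m : nat) : (Z.to_nat n < m)%nat ->
  shell_riemann p (gg_integrand p chi s) n m = gg_shell n.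
Proof.
  intros Hm. destruct m as [|m]; [lia|].
  pose proof IZR_p_gt_1 as Hp1.
  assert (Hpm : IZR p ^ m <> 0) by (apply pow_nonzero; lra).
  rewrite shell_riemann_gg, powerRZ_sub_nat by lra. unfold gg_shell.
  destruct (Z.leb_spec n 0) as [Hn|Hn].
  - replace (Z.to_nat n) with 0%nat by lia.
    rewrite ramanujan_sum_0, <- RtoC_mult, !INR_Z2N_pow by lia.
    f_equal. f_equal. simpl. field. split; [lra | exact Hpm].
  - destruct (Z.eqb_spec n 1) as [->|Hn1].
    + change (Z.to_nat 1) with 1%nat.
      rewrite ramanujan_sum_1, <- RtoC_mult, INR_Z2N_pow by lia.
      replace (powerRZ (IZR p) 1 / IZR p ^ S m * - IZR p ^ m) with (- (1))
        by (simpl; field; lra).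
      rewrite RtoC_opp. ring.
    + replace (Z.to_nat n) with (S (S (Z.to_nat n - 2))) by lia.
      rewrite ramanujan_sum_high by lia. ring.
Qed.

Lemma gg_is_shell_integral (n : Z) :
  is_shell_integral p (gg_integrand p chi s) n (gg_shell n).
Proof.
  apply (filterlim_eventually_const _ _ (S (Z.to_nat n))).
  intros m Hm. apply shell_riemann_gg_eventually. lia.
Qed.

Lemma gg_shell_nonpos (j : nat) :
  gg_shell (- Z.of_nat j) = (RtoC (1 - / IZR p) * (chi p * Cpow_pos (IZR p) (- s)) ^ j)%C.
Proof.
  pose proof IZR_p_gt_1 as Hp1.
  set (y := powerRZ (IZR p) (- Z.of_nat j)).
  assert (Hy : (RtoC y * Cpow_pos y (s - 1) = Cpow_pos (IZR p) (- s) ^ j)%C).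
  { rewrite <- (Cpow_pos_1 y), <- Cpow_pos_add by (apply powerRZ_lt; lra).
    unfold y. rewrite Cpow_pos_powerRZ, <- Cpow_pos_mult_INR by lra.
    f_equal. rewrite opp_IZR, <- INR_IZR_INZ, RtoC_opp. ring. }
  unfold gg_shell. rewrite (proj2 (Z.leb_le _ 0)) by lia.
  unfold gg_radial, frak_x. fold y.
  rewrite Z.opp_involutive, Cpow_Z_of_nat, Cpow_mult_l, RtoC_mult, <- Hy. ring.
Qed.

Lemma gg_shell_1 : gg_shell 1 = (- Cpow_pos (IZR p) (s - 1) / chi p)%C.
Proof.
  unfold gg_shell. replace (1 <=? 0)%Z with false by reflexivity. rewrite Z.eqb_refl.
  unfold gg_radial, frak_x. change (- (1))%Z with (-1)%Z.
  rewrite powerRZ_1, Cpow_Z_m1. unfold Cdiv. ring.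
Qed.

Lemma gg_shell_gt_1 (n : Z) : (1 < n)%Z -> gg_shell n = 0%C.
Proof.
  intros Hn. unfold gg_shell.
  rewrite (proj2 (Z.leb_gt _ _)), (proj2 (Z.eqb_neq _ _)) by lia. reflexivity.
Qed.

Lemma gg_series_pos :
  is_series (fun j => gg_shell (Z.of_nat j + 1)) (gg_shell 1).
Proof.
  apply (is_series_first (fun j => gg_shell (Z.of_nat j + 1))).
  intros j Hj. apply gg_shell_gt_1. lia.
Qed.

Hypothesis Hs : 0 < Re s.
Hypothesis Hchi1 : Cmod (chi p) <= 1.

Lemma Cmod_gg_ratio_lt_1 : Cmod (chi p * Cpow_pos (IZR p) (- s)) < 1.
Proof.
  pose proof (Cmod_Cpow_pos_opp_lt_1 (IZR p) s IZR_p_gt_1 Hs).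
  pose proof (Cmod_ge_0 (Cpow_pos (IZR p) (- s))).
  rewrite Cmod_mult. nra.
Qed.

Lemma gg_series_nonpos :
  is_series (fun j => gg_shell (- Z.of_nat j))
    (RtoC (1 - / IZR p) / (1 - chi p * Cpow_pos (IZR p) (- s)))%C.
Proof.
  apply (is_series_ext
           (fun j => scal (RtoC (1 - / IZR p)) ((chi p * Cpow_pos (IZR p) (- s)) ^ j)%C)).
  - intros j. rewrite gg_shell_nonpos. reflexivity.
  - apply (is_series_scal_l (RtoC (1 - / IZR p))
             _ (/ (1 - chi p * Cpow_pos (IZR p) (- s)))%C).
    apply is_series_Cgeom, Cmod_gg_ratio_lt_1.
Qed.

End GelfandGraevTate.

Theorem mainTheorem1 (p k : Z) (chi : Z -> C) (s : C) :
  prime p -> (0 < k)%Z -> ~ (p | k)%Z ->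
  is_dirichlet_character k chi ->
  (0 < Re s)%R ->
  is_Qp_integral p (gg_integrand p chi s)
    (Cdiv (Cminus (chi p) (Cpow_pos (IZR p) (Cminus s (RtoC 1))))
          (Cmult (chi p)
                 (Cminus (RtoC 1) (Cmult (chi p) (Cpow_pos (IZR p) (Copp s)))))).
Proof.
  intros Hprime Hk Hpk Hchi Hs.
  assert (Hp : (1 < p)%Z) by (pose proof (prime_ge_2 p Hprime); lia).
  assert (Hx0 : chi p <> 0%C)
    by (apply (dirichlet_neq_0 k chi Hchi), prime_rel_prime; assumption).
  pose proof (dirichlet_Cmod_le_1 k chi Hchi Hk p) as Hx1.
  pose proof (Cminus_1_neq_0 _ (Cmod_gg_ratio_lt_1 p chi s Hp Hs Hx1)) as Hden.
  exists (gg_shell p chi s). split; [intros n; apply gg_is_shell_integral; exact Hp|].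
  eexists; eexists. split; [apply gg_series_nonpos; assumption|].
  split; [apply gg_series_pos; exact Hp|].
  assert (Hinv_p : RtoC (/ IZR p)
                   = (Cpow_pos (IZR p) (s - 1) * Cpow_pos (IZR p) (- s))%C).
  { rewrite <- Cpow_pos_add, <- Cpow_pos_opp_1 by (apply IZR_lt; lia).
    f_equal. apply injective_projections; simpl; ring. }
  rewrite gg_shell_1, RtoC_minus, Hinv_p. field. split; assumption.
Qed.
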